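(* Let $A$ be a simple infinite-dimensional unital $C^*$-algebra which is not purely infinite, and let $x\in A_+\setminus\{0\}$. Then for every $\varepsilon>0$ there is $y\in (\overline{xAx})_+\setminus\{0\}$ such that whenever $f\in A$ satisfies $0\le f\le 1$ and $1-f\precsim y$, one has $\|f\|>1-\varepsilon$.
   Context: For positive elements $a,b$ of a $C^*$-algebra $A$, $a\precsim b$ (Cuntz subequivalence) means there is a sequence $(v_n)$ in $A$ with $\|a-v_nbv_n^*\|\to 0$. A simple unital $C^*$-algebra $A$ is purely infinite if it is infinite-dimensional and for every non-zero $a\in A$ there are $x,y\in A$ with $xay=1$. $\overline{xAx}$ denotes the hereditary subalgebra (norm closure of $xAx$). *)

From mathcomp Require Import all_boot all_order all_algebra.
From mathcomp Require Import complex reals.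
Set Implicit Arguments. Unset Strict Implicit. Unset Printing Implicit Defensive.
Import Order.TTheory GRing.Theory Num.Theory.
Local Open Scope ring_scope.
Local Open Scope complex_scope.

Section CStar.
Variables (R : realType) (A : algType R[i]) (nrm : A -> R) (st : A -> A).

Definition cvg_nrm (u : nat -> A) (l : A) : Prop :=
  forall e : R, 0 < e -> exists N : nat, forall n, (N <= n)%N -> nrm (u n - l) < e.

Definition cauchy_nrm (u : nat -> A) : Prop :=
  forall e : R, 0 < e -> exists N : nat, forall m n, (N <= m)%N -> (N <= n)%N ->
    nrm (u m - u n) < e.

Record is_cstar_algebra : Prop := {
  cs_one_neq0 : (1 : A) != 0;
  cs_nrm_ge0 : forall a, 0 <= nrm a;
  cs_nrm_eq0 : forall a, nrm a = 0 -> a = 0;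
  cs_nrm_tri : forall a b, nrm (a + b) <= nrm a + nrm b;
  cs_nrm_scale : forall (c : R[i]) a, nrm (c *: a) = ComplexField.Normc.normc c * nrm a;
  cs_nrm_mul : forall a b, nrm (a * b) <= nrm a * nrm b;
  cs_complete : forall u, cauchy_nrm u -> exists l, cvg_nrm u l;
  cs_st_add : forall a b, st (a + b) = st a + st b;
  cs_st_scale : forall (c : R[i]) a, st (c *: a) = (c^*)%C *: st a;
  cs_st_mul : forall a b, st (a * b) = st b * st a;
  cs_st_invol : forall a, st (st a) = a;
  cs_cstar_id : forall a, nrm (st a * a) = nrm a ^+ 2
}.

Definition invertible (a : A) : Prop := exists b : A, a * b = 1 /\ b * a = 1.

Definition spectrum (a : A) : R[i] -> Prop :=
  fun lam => ~ invertible (a - lam%:A).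

Definition positive (a : A) : Prop :=
  st a = a /\ forall lam : R[i], spectrum a lam -> 0 <= lam.

Definition cuntz_le (a b : A) : Prop :=
  exists v : nat -> A, cvg_nrm (fun n => v n * b * st (v n)) a.

Definition closed_ideal (I : A -> Prop) : Prop :=
  [/\ I 0,
      (forall a b, I a -> I b -> I (a + b)),
      (forall (c : R[i]) a, I a -> I (c *: a)),
      (forall a b, I b -> I (a * b) /\ I (b * a)) &
      (forall u l, (forall n, I (u n)) -> cvg_nrm u l -> I l)].

Definition simple_alg : Prop :=
  forall I, closed_ideal I -> (forall a, I a -> a = 0) \/ (forall a, I a).

Definition finite_dim : Prop :=
  exists s : seq A, forall a : A, exists c : 'I_(size s) -> R[i],
    a = \sum_(i < size s) c i *: s`_i.

Definition purely_infinite : Prop :=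
  ~ finite_dim /\ forall a : A, a != 0 -> exists x y : A, x * a * y = 1.

(* membership in the hereditary subalgebra: norm closure of xAx *)
Definition in_hered (x y : A) : Prop :=
  forall e : R, 0 < e -> exists a : A, nrm (y - x * a * x) < e.

End CStar.

From mathcomp Require Import all_boot all_order all_algebra.
From mathcomp Require Import complex reals boolp.
From mathcomp Require Import ring lra.
Import Order.TTheory GRing.Theory Num.Theory.
Local Open Scope ring_scope.

(* Since A is not purely infinite, some a != 0 satisfies p a q != 1 for
   all p, q.  By simplicity x c a != 0 for some c (else a lies in a proper closed
   ideal).  Put w = x c a, z = w (st w) and y = z ^ 2, which lies in x A x.  Then
   y != 0 by the C*-identity, y is positive as the square of a self-adjoint element, and if
   nrm f <= 1 - eps and v y (st v) is eps-close to 1 - f, then v y (st v) is within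
   distance < 1 of 1, hence invertible by a Neumann series; a left inverse u then
   gives (u v x c) a (st w w (st w) (st v)) = 1, a contradiction. *)

Local Notation normc := ComplexField.Normc.normc.

Lemma bernoulli_ineq {R : realDomainType} (h : R) (n : nat) :
  0 <= h -> 1 + n%:R * h <= (1 + h) ^+ n.
Proof.
move=> h0; elim: n => [|n IH]; first by rewrite mul0r addr0 expr0.
have n0 : 0 <= (n%:R : R) by rewrite ler0n.
rewrite exprS -natr1; nra.
Qed.

(* Geometric decay: the powers of a real 0 <= r < 1 are eventually below any e > 0,
   since r ^- n = (1 + h) ^+ n >= 1 + n h with h = r^-1 - 1 > 0. *)
Lemma expr_eventually_lt {R : realType} {r e : R} : 0 <= r -> r < 1 -> 0 < e ->
  exists N : nat, forall n, (N <= n)%N -> r ^+ n < e.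
Proof.
move=> r0 r1 e0; have [->|rn0] := eqVneq r 0.
  by exists 1%N => n n1; rewrite expr0n eqn0Ngt n1.
have rp : 0 < r by rewrite lt_def rn0.
set h := r^-1 - 1; have hp : 0 < h by rewrite subr_gt0 invf_gt1.
have [N eN] : exists N : nat, e^-1 < N%:R * h.
  exists (Num.bound (e^-1 / h)); rewrite -ltr_pdivrMr //.
  by apply: archi_boundP; rewrite divr_ge0 // ?invr_ge0 ltW.
exists N => n Nn; rewrite -[e]invrK -[r ^+ n]invrK ltf_pV2 ?posrE ?invr_gt0 ?exprn_gt0 //.
have Nh_le : N%:R * h <= n%:R * h by apply: ler_wpM2r; [exact: ltW | rewrite ler_nat].
have bern := bernoulli_ineq h n (ltW hp).
have one_h : 1 + h = r^-1 by rewrite addrC subrK.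
rewrite one_h exprVn in bern; lra.
Qed.

Lemma lt_mul_bound (R : realType) (k t e : R) :
  0 <= k -> 0 <= t -> t < e / (k + 1) -> k * t < e.
Proof.
move=> k0 t0 te; have K0 : 0 < k + 1 by lra.
have : (k + 1) * t < (k + 1) * (e / (k + 1)) by rewrite ltr_pM2l.
rewrite [X in _ < X]mulrC divfK ?gt_eqF //; nra.
Qed.

Lemma normc_sqr {R : realType} (x y : R) : normc (Complex x y) ^+ 2 = x ^+ 2 + y ^+ 2.
Proof. by rewrite /= sqr_sqrtr // addr_ge0 ?sqr_ge0. Qed.

Section CStarAlgebra.
Context {R : realType} {A : algType R[i]} {nrm : A -> R} {st : A -> A}.
Hypothesis HA : is_cstar_algebra nrm st.

Local Notation cvg := (cvg_nrm nrm).

Lemma nrm0 : nrm 0 = 0.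
Proof. by have := cs_nrm_scale HA 0 0; rewrite scale0r ComplexField.Normc.normc0 mul0r. Qed.

Lemma nrmN a : nrm (- a) = nrm a.
Proof.
have := cs_nrm_scale HA (-1) a.
by rewrite scaleN1r normcN ComplexField.Normc.normc1 mul1r.
Qed.

Lemma nrm_distC a b : nrm (a - b) = nrm (b - a).
Proof. by rewrite -nrmN opprB. Qed.

Lemma nrm_small_eq0 a : (forall e : R, 0 < e -> nrm a < e) -> a = 0.
Proof.
move=> small; apply: (cs_nrm_eq0 HA); apply/eqP; apply: contraT => na0.
have pos : 0 < nrm a by rewrite lt_def na0 (cs_nrm_ge0 HA).
by have := small _ pos; rewrite ltxx.
Qed.

Lemma st0 : st 0 = 0.
Proof.
by have /eqP := cs_st_add HA 0 0; rewrite addr0 -subr_eq subrr eq_sym => /eqP.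
Qed.

Lemma st1 : st 1 = 1.
Proof. by have := cs_st_mul HA (st 1) 1; rewrite mulr1 !(cs_st_invol HA) mulr1. Qed.

Lemma st_scalar (c : R[i]) : st c%:A = (c^*)%C%:A.
Proof. by rewrite (cs_st_scale HA) st1. Qed.

Lemma st_eq0 a : st a = 0 -> a = 0.
Proof. by move=> sa0; rewrite -(cs_st_invol HA a) sa0 st0. Qed.

(* By the C*-identity, st b * b and b * st b vanish only when b does. *)
Lemma st_mul_self_neq0 {b : A} : b != 0 -> st b * b != 0.
Proof.
apply: contra_neq => E; apply: (cs_nrm_eq0 HA); apply/eqP.
have /esym/eqP := cs_cstar_id HA b.
by rewrite E nrm0 expf_eq0 => /andP[].
Qed.

Lemma mul_st_self_neq0 {b : A} : b != 0 -> b * st b != 0.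
Proof.
move=> b0; rewrite -{1}(cs_st_invol HA b); apply: st_mul_self_neq0.
by apply: contra_neq b0; exact: st_eq0.
Qed.

Lemma nrm1 : nrm 1 = 1.
Proof.
have n0 : nrm 1 != 0.
  by apply: contra (cs_one_neq0 HA) => /eqP /(cs_nrm_eq0 HA) ->.
by apply: (mulfI n0); rewrite mulr1 -expr2 -(cs_cstar_id HA) st1 mulr1.
Qed.

Lemma nrm_scalar (c : R[i]) : nrm c%:A = normc c.
Proof. by rewrite (cs_nrm_scale HA) nrm1 mulr1. Qed.

Lemma nrm_exp b n : nrm (b ^+ n) <= nrm b ^+ n.
Proof.
elim: n => [|n IH]; first by rewrite !expr0 nrm1.
rewrite !exprSr; apply: le_trans (cs_nrm_mul HA _ _) _.
by apply: ler_wpM2r; first exact: (cs_nrm_ge0 HA).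
Qed.

Lemma cvg_nrm_cst a : cvg (fun=> a) a.
Proof. by move=> e e0; exists 0%N => n _; rewrite subrr nrm0. Qed.

Lemma cvg_nrm_unique {u : nat -> A} {l l' : A} : cvg u l -> cvg u l' -> l = l'.
Proof.
move=> cv cv'; apply/eqP; rewrite -subr_eq0; apply/eqP; apply: nrm_small_eq0 => e e0.
have e20 : 0 < e / 2 by rewrite divr_gt0.
have [N HN] := cv _ e20; have [N' HN'] := cv' _ e20.
set n := maxn N N'.
have d1 := HN n (leq_maxl _ _); have d2 := HN' n (leq_maxr _ _).
have -> : l - l' = (u n - l') - (u n - l) by rewrite [RHS]addrC opprB addrA subrK.
apply: le_lt_trans (cs_nrm_tri HA _ _) _; rewrite nrmN; lra.
Qed.

Lemma cvg_nrm_mull c {u : nat -> A} {l : A} : cvg u l -> cvg (fun n => c * u n) (c * l).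
Proof.
move=> cv e e0.
have [N HN] := cv _ (divr_gt0 e0 (ltr_wpDl (cs_nrm_ge0 HA c) ltr01)).
exists N => n /HN lt; rewrite -mulrBr; apply: le_lt_trans (cs_nrm_mul HA _ _) _.
by apply: lt_mul_bound; rewrite ?(cs_nrm_ge0 HA).
Qed.

Lemma cvg_nrm_mulr c {u : nat -> A} {l : A} : cvg u l -> cvg (fun n => u n * c) (l * c).
Proof.
move=> cv e e0.
have [N HN] := cv _ (divr_gt0 e0 (ltr_wpDl (cs_nrm_ge0 HA c) ltr01)).
exists N => n /HN lt; rewrite -mulrBl; apply: le_lt_trans (cs_nrm_mul HA _ _) _.
by rewrite mulrC; apply: lt_mul_bound; rewrite ?(cs_nrm_ge0 HA).
Qed.

Lemma cvg_nrm_one_sub_exp b : nrm b < 1 -> cvg (fun n => 1 - b ^+ n) 1.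
Proof.
move=> b1 e e0.
have [N HN] := expr_eventually_lt (cs_nrm_ge0 HA b) b1 e0.
exists N => n /HN lt; rewrite addrAC subrr add0r nrmN.
exact: le_lt_trans (nrm_exp b n) lt.
Qed.

Definition geom_sum (b : A) (n : nat) : A := \sum_(i < n) b ^+ i.

Lemma geom_sum_mull b n : (1 - b) * geom_sum b n = 1 - b ^+ n.
Proof. by rewrite -opprB mulNr -subrX1 opprB. Qed.

Lemma geom_sum_mulr b n : geom_sum b n * (1 - b) = 1 - b ^+ n.
Proof.
have comm_b : GRing.comm (1 - b) b by apply/commr_sym/commrB; [exact: commr1|].
have -> : geom_sum b n * (1 - b) = (1 - b) * geom_sum b n.
  by apply/esym/commr_sum => i _; apply: commrX.
exact: geom_sum_mull.
Qed.

Lemma geom_sum_split b n d : geom_sum b (n + d) - geom_sum b n = b ^+ n * geom_sum b d.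
Proof.
rewrite /geom_sum big_split_ord /= addrAC subrr add0r mulr_sumr.
by apply: eq_bigr => i _; rewrite exprD.
Qed.

Lemma nrm_geom_sum b d : nrm b < 1 -> nrm (geom_sum b d) * (1 - nrm b) <= 1.
Proof.
move=> b1; have r0 := cs_nrm_ge0 HA b.
have le_sum : nrm (geom_sum b d) <= \sum_(i < d) nrm b ^+ i.
  apply: (big_ind2 (fun a r => nrm a <= r)); first by rewrite nrm0.
    by move=> a1 r1 a2 r2 h1 h2; apply: le_trans (cs_nrm_tri HA _ _) (lerD h1 h2).
  by move=> i _; exact: nrm_exp.
have telescope : (\sum_(i < d) nrm b ^+ i) * (1 - nrm b) = 1 - nrm b ^+ d.
  by rewrite mulrC -opprB mulNr -subrX1 opprB.
have rd : 0 <= nrm b ^+ d by rewrite exprn_ge0.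
apply: le_trans (_ : (\sum_(i < d) nrm b ^+ i) * (1 - nrm b) <= 1).
  by apply: ler_wpM2r => //; lra.
by rewrite telescope; lra.
Qed.

Lemma geom_sum_cauchy b : nrm b < 1 -> cauchy_nrm nrm (geom_sum b).
Proof.
move=> b1 e e0; have r0 := cs_nrm_ge0 HA b.
have r1 : 0 < 1 - nrm b by rewrite subr_gt0.
have [N HN] := expr_eventually_lt r0 b1 (mulr_gt0 e0 r1).
suff tail m n : (N <= n)%N -> (n <= m)%N -> nrm (geom_sum b m - geom_sum b n) < e.
  exists N => m n Nm Nn; have [nm|/ltnW mn] := leqP n m.
    exact: tail.
  by rewrite nrm_distC; exact: tail.
move=> Nn nm; rewrite -(subnKC nm) geom_sum_split.
have bound := nrm_geom_sum b (m - n) b1.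
have rn := HN n Nn.
have s0 := cs_nrm_ge0 HA (geom_sum b (m - n)).
have p0 : 0 <= nrm (b ^+ n) := cs_nrm_ge0 HA _.
have pn := nrm_exp b n.
apply: le_lt_trans (cs_nrm_mul HA _ _) _.
rewrite -(ltr_pM2r r1); nra.
Qed.

Lemma neumann b : nrm b < 1 -> invertible (1 - b).
Proof.
move=> b1; have [l cv] := cs_complete HA (geom_sum_cauchy b b1).
have one := cvg_nrm_one_sub_exp b b1.
exists l; split.
- apply: cvg_nrm_unique (cvg_nrm_mull (1 - b) cv) _.
  by move=> e /one [N HN]; exists N => n /HN; rewrite geom_sum_mull.
- apply: cvg_nrm_unique (cvg_nrm_mulr (1 - b) cv) _.
  by move=> e /one [N HN]; exists N => n /HN; rewrite geom_sum_mulr.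
Qed.

Lemma invertible_scale (k : R[i]) (a : A) : k != 0 -> invertible a -> invertible (k *: a).
Proof.
move=> k0 [w [aw wa]]; exists (k^-1 *: w).
by rewrite -!scalerAr -!scalerAl !scalerA mulfV ?mulVf // !scale1r aw wa.
Qed.

Lemma invertible_mul (a b : A) : invertible a -> invertible b -> invertible (a * b).
Proof.
move=> [u [au ua]] [v [bv vb]]; exists (v * u); split.
- by rewrite mulrA -(mulrA a) bv mulr1 au.
- by rewrite mulrA -(mulrA v) ua mulr1 vb.
Qed.

(* Spectral radius bound: a - nu is invertible as soon as nrm a < |nu|, by a Neumann
   series; hence every spectral value of a has modulus at most nrm a. *)
Lemma spectrum_bound {a : A} {nu : R[i]} : spectrum a nu -> normc nu <= nrm a.
Proof.
move=> sp; rewrite leNgt; apply/negP => lt; apply: sp.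
have nu_gt0 : 0 < normc nu := le_lt_trans (cs_nrm_ge0 HA a) lt.
have nu0 : nu != 0 by apply: contraTneq nu_gt0 => ->; rewrite ComplexField.Normc.normc0 ltxx.
have -> : a - nu%:A = (- nu) *: (1 - nu^-1 *: a).
  by rewrite scalerBr scalerA mulNr mulfV // scaleN1r opprK scaleNr addrC.
apply: invertible_scale; first by rewrite oppr_eq0.
apply: neumann; rewrite (cs_nrm_scale HA) ComplexField.Normc.normcV.
by rewrite ltr_pdivrMl // mulr1.
Qed.

Lemma mul_add_scalars (a : A) (p q : R[i]) :
  (a + p%:A) * (a + q%:A) = a * a + (p + q) *: a + (p * q)%:A.
Proof.
rewrite mulrDl !mulrDr mulr_algr mulr_algl -scalerAl mul1r scalerA scalerDl.
by rewrite !addrA; congr (_ + _); exact: addrAC.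
Qed.

(* For self-adjoint a and real s, the C*-identity gives
   nrm (a + i s) ^ 2 = nrm (a ^ 2 + s ^ 2) <= nrm a ^ 2 + s ^ 2. *)
Lemma nrm_add_imag {a : A} (s : R) : st a = a ->
  nrm (a + (Complex 0 s)%:A) ^+ 2 <= nrm a ^+ 2 + s ^+ 2.
Proof.
move=> sa; set c : R[i] := Complex 0 s.
rewrite -(cs_cstar_id HA) (cs_st_add HA) st_scalar sa mul_add_scalars.
have -> : (c^*)%C + c = 0 by apply/eqP; rewrite eq_complex /= addNr addr0 eqxx.
have -> : (c^*)%C * c = Complex (s ^+ 2) 0.
  by apply/eqP; rewrite eq_complex /=; apply/andP; split; apply/eqP; ring.
rewrite scale0r addr0; apply: le_trans (cs_nrm_tri HA _ _) _.
rewrite nrm_scalar /= expr0n /= addr0 sqrtr_sqr ger0_norm ?sqr_ge0 // lerD2r.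
by rewrite -(cs_cstar_id HA) sa.
Qed.

(* If al + i be were a spectral value
   with be != 0, then al + i (be + s) would be one for a + i s; for the right choice of
   the real shift s this contradicts spectrum_bound and nrm_add_imag. *)
Lemma selfadjoint_spectrum_real {a : A} {lam : R[i]} :
  st a = a -> spectrum a lam -> complex.Im lam = 0.
Proof.
case: lam => al be sa sp /=; apply/eqP; apply: contraT => be0; exfalso.
set s := (nrm a ^+ 2 + 1) / (2 * be).
have hs : 2 * be * s = nrm a ^+ 2 + 1.
  by rewrite mulrC divfK // mulf_neq0 // pnatr_eq0.
have shifted : spectrum (a + (Complex 0 s)%:A) (Complex al (be + s)).
  have -> : Complex al (be + s) = Complex al be + Complex 0 s.
    by apply/eqP; rewrite eq_complex /= addr0 !eqxx.
  by rewrite /spectrum scalerDl opprD addrACA subrr addr0.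
have nu_le := spectrum_bound shifted.
have sq_le := nrm_add_imag s sa.
have nu0 : 0 <= normc (Complex al (be + s)) by rewrite /= sqrtr_ge0.
have nu2 := normc_sqr al (be + s).
have sq_nu_le : normc (Complex al (be + s)) ^+ 2 <= nrm (a + (Complex 0 s)%:A) ^+ 2.
  by rewrite !expr2; apply: ler_pM.
rewrite nu2 in sq_nu_le; have al2 := sqr_ge0 al; have be2 := sqr_ge0 be.
clear sa sp shifted nu_le; clearbody s.
move: sq_le sq_nu_le hs; move: (nrm (a + _)) (nrm a) => X N; nra.
Qed.

Lemma selfadjoint_add_nonreal_invertible (a : A) (p : R[i]) :
  st a = a -> complex.Im p != 0 -> invertible (a + p%:A).
Proof.
move=> sa p0; have -> : a + p%:A = a - (- p)%:A by rewrite scaleNr opprK.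
apply: contrapT => sp; move: p0 (selfadjoint_spectrum_real sa sp); clear sp.
by case: p => px py /= py0 /eqP; rewrite oppr_eq0 (negbTE py0).
Qed.

(* The square of a self-adjoint element z is positive: its spectrum is real, and for
   l < 0 the element z ^ 2 - l factors as (z + i r) (z - i r) with r = sqrt (- l). *)
Lemma sqr_selfadjoint_positive {z : A} : st z = z -> positive st (z * z).
Proof.
move=> sz; have szz : st (z * z) = z * z by rewrite (cs_st_mul HA) sz.
split=> // lam sp; have := selfadjoint_spectrum_real szz sp.
case: lam sp => l y sp /= y0; subst y; rewrite lecE /= eqxx /=.
rewrite leNgt; apply/negP => l0; apply: sp.
set r := Num.sqrt (- l).
have r0 : 0 < r by rewrite sqrtr_gt0 oppr_gt0.
have r2 : r ^+ 2 = - l by rewrite sqr_sqrtr // oppr_ge0 ltW.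
have -> : z * z - (Complex l 0)%:A =
          (z + (Complex 0 r)%:A) * (z + (Complex 0 (- r))%:A).
  rewrite mul_add_scalars.
  have -> : Complex 0 r + Complex 0 (- r) = 0 :> R[i].
    by apply/eqP; rewrite eq_complex /= subrr addr0 eqxx.
  have -> : Complex 0 r * Complex 0 (- r) = - Complex l 0 :> R[i].
    apply/eqP; rewrite eq_complex /=; apply/andP; split; apply/eqP; last by ring.
    by rewrite -r2; ring.
  by rewrite scale0r addr0 scaleNr.
by apply: invertible_mul; apply: selfadjoint_add_nonreal_invertible;
  rewrite //= ?oppr_eq0 gt_eqF.
Qed.

Lemma corner_annihilator_ideal (x : A) :
  closed_ideal nrm (fun z => forall c d, x * c * z * d = 0).
Proof.
split.
- by move=> c d; rewrite mulr0 mul0r.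
- by move=> a b Ha Hb c d; rewrite mulrDr mulrDl Ha Hb addr0.
- by move=> k a Ha c d; rewrite -scalerAr -scalerAl Ha scaler0.
- move=> a b Hb; split => c d.
  + by have := Hb (c * a) d; rewrite !mulrA.
  + by have := Hb c (a * d); rewrite !mulrA.
- move=> u l Hu cv c d.
  have cv0 : cvg (fun=> 0) (x * c * l * d).
    move=> e /(cvg_nrm_mulr d (cvg_nrm_mull (x * c) cv)) [N HN].
    by exists N => n /HN /=; rewrite Hu.
  exact: cvg_nrm_unique cv0 (cvg_nrm_cst 0).
Qed.

(* In a simple algebra, x A a != 0 whenever x and a are nonzero: otherwise a would
   lie in the proper ideal corner_annihilator_ideal x. *)
Lemma simple_corner_nonzero {x a : A} : simple_alg nrm -> x != 0 -> a != 0 ->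
  exists c, x * c * a != 0.
Proof.
move=> simple x0 a0; apply: contrapT => /forallNP none.
have xca0 c : x * c * a = 0 by apply/eqP; apply: contrapT => /negP; exact: none.
case: (simple _ (corner_annihilator_ideal x)) => [trivial | full].
- by move/eqP: a0; apply; apply: trivial => c d; rewrite xca0 mul0r.
- by move/eqP: x0; apply; have := full 1 1 1; rewrite !mulr1.
Qed.

(* An element within eps of 1 - f, where nrm f <= 1 - eps, is within distance < 1
   of the unit and hence invertible. *)
Lemma invertible_near_one_sub {f g : A} {eps : R} :
  nrm f <= 1 - eps -> nrm (g - (1 - f)) < eps -> invertible g.
Proof.
move=> f_le g_near; have -> : g = 1 - (1 - g) by rewrite opprB addrC subrK.
apply: neumann; have -> : 1 - g = f - (g - (1 - f)).
  by rewrite [in RHS]opprB [in RHS]addrA [f + _]addrC subrK.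
by apply: le_lt_trans (cs_nrm_tri HA _ _) _; rewrite nrmN; lra.
Qed.

End CStarAlgebra.

Lemma not_purely_infinite_witness {R : realType} {A : algType R[i]} :
  ~ finite_dim A -> ~ purely_infinite A ->
  exists a : A, a != 0 /\ forall p q, p * a * q != 1.
Proof.
move=> inf not_pi; apply: contrapT => none; apply: not_pi; split=> // a a0.
apply: contrapT => no_inv; apply: none; exists a; split=> // p q.
by apply/eqP => E; apply: no_inv; exists p, q.
Qed.

Theorem lemma3p3 (R : realType) (A : algType R[i]) (nrm : A -> R) (st : A -> A)
  (HA : is_cstar_algebra nrm st) (Hsimple : simple_alg nrm)
  (Hinf : ~ finite_dim A) (Hnpi : ~ purely_infinite A)
  (x : A) (Hx : positive st x) (Hx0 : x != 0)
  (eps : R) (Heps : 0 < eps) :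
  exists y : A,
    [/\ in_hered nrm x y, positive st y, y != 0 &
        forall f : A, positive st f -> positive st (1 - f) ->
          cuntz_le nrm st (1 - f) y -> 1 - eps < nrm f].
Proof.
have [a [a0 no_unit]] := not_purely_infinite_witness Hinf Hnpi.
have [c w0] := simple_corner_nonzero HA Hsimple Hx0 a0.
have sx : st x = x by case: Hx.
set w := x * c * a in w0; set z := w * st w.
have sz : st z = z by rewrite /z (cs_st_mul HA) (cs_st_invol HA).
have z0 : z != 0 := mul_st_self_neq0 HA w0.
exists (z * z); split.
- move=> e e0; exists (c * a * st w * w * st a * st c).
  have -> : z * z = x * (c * a * st w * w * st a * st c) * x.
    by rewrite /z {2}/w !(cs_st_mul HA) sx /w !mulrA.
  by rewrite subrr (nrm0 HA).
- exact: (sqr_selfadjoint_positive HA sz).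
- by rewrite -{1}sz; exact: (st_mul_self_neq0 HA z0).
move=> f _ _ [v cv]; rewrite ltNge; apply/negP => f_le.
have [N HN] := cv eps Heps.
have [u [_ u_inv]] := invertible_near_one_sub HA f_le (HN N (leqnn N)).
apply: (negP (no_unit (u * v N * x * c) (st w * w * st w * st (v N)))).
by rewrite -u_inv /z /w !mulrA.
Qed.
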